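(* The logic $\mathsf{iKRI}:=\mathsf{ICK}\oplus((p\wedge(p\mathrel{\Box\!\!\!\rightarrow} q))\to q)\oplus(((p\mathrel{\Box\!\!\!\rightarrow} q)\wedge(q\mathrel{\Box\!\!\!\rightarrow} r))\to(p\mathrel{\Box\!\!\!\rightarrow} r))$ is sound and complete with respect to the class of conditional frames $(X,\leq,\mathcal{R})$ that satisfy, for all worlds $x\in X$ and upsets $a,b$: $x\in a$ implies $x\in{\uparrow}R_a[x]$, and $R_a[x]\subseteq b$ implies $R_a[x]\subseteq{\uparrow}R_b[x]$.
   Context: Formulas: $\phi ::= p\mid\bot\mid\phi\wedge\phi\mid\phi\vee\phi\mid\phi\to\phi\mid\phi\mathrel{\Box\!\!\!\rightarrow}\phi$. $\mathsf{ICK}\oplus\Gamma$ is the smallest set containing intuitionistic propositional logic, $\Gamma$, $(p\mathrel{\Box\!\!\!\rightarrow}(q\wedge r))\leftrightarrow((p\mathrel{\Box\!\!\!\rightarrow} q)\wedge(p\mathrel{\Box\!\!\!\rightarrow} r))$ and $(p\mathrel{\Box\!\!\!\rightarrow}\top)\leftrightarrow\top$, closed under uniform substitution, modus ponens and congruence rules for both arguments of $\mathrel{\Box\!\!\!\rightarrow}$. A conditional frame is $(X,\leq,\mathcal{R})$, $(X,\leq)$ a nonempty preorder, $\mathcal{R}=\{R_a\mid a\text{ an upset}\}$ with $(\leq\circ R_a)\subseteq(R_a\circ\leq)$; valuations assign upsets to letters and $x\models\phi\mathrel{\Box\!\!\!\rightarrow}\psi$ iff every $y$ with $xR_{V(\phi)}y$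 satisfies $\psi$. *)

From Stdlib Require Import Classical.

Inductive form : Set :=
  | Var : nat -> form
  | Bot : form
  | And : form -> form -> form
  | Or : form -> form -> form
  | Imp : form -> form -> form
  | Cond : form -> form -> form.

Definition Top : form := Imp Bot Bot.
Definition Iff (a b : form) : form := And (Imp a b) (Imp b a).

Fixpoint subst (s : nat -> form) (f : form) : form :=
  match f with
  | Var n => s n
  | Bot => Bot
  | And a b => And (subst s a) (subst s b)
  | Or a b => Or (subst s a) (subst s b)
  | Imp a b => Imp (subst s a) (subst s b)
  | Cond a b => Cond (subst s a) (subst s b)
  end.

Definition p := Var 0.
Definition q := Var 1.
Definition r := Var 2.

(** Hilbert-style axioms of intuitionistic propositional logic (in letters;
    all instances are obtained by closure under uniform substitution). *)
Inductive ipc_axiom : form -> Prop :=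
  | ipc_K : ipc_axiom (Imp p (Imp q p))
  | ipc_S : ipc_axiom (Imp (Imp p (Imp q r)) (Imp (Imp p q) (Imp p r)))
  | ipc_andE1 : ipc_axiom (Imp (And p q) p)
  | ipc_andE2 : ipc_axiom (Imp (And p q) q)
  | ipc_andI : ipc_axiom (Imp p (Imp q (And p q)))
  | ipc_orI1 : ipc_axiom (Imp p (Or p q))
  | ipc_orI2 : ipc_axiom (Imp q (Or p q))
  | ipc_orE : ipc_axiom (Imp (Imp p r) (Imp (Imp q r) (Imp (Or p q) r)))
  | ipc_efq : ipc_axiom (Imp Bot p).

Inductive ICK_plus (Gamma : form -> Prop) : form -> Prop :=
  | d_ipc : forall f, ipc_axiom f -> ICK_plus Gamma f
  | d_gamma : forall f, Gamma f -> ICK_plus Gamma f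
  | d_CM : ICK_plus Gamma (Iff (Cond p (And q r)) (And (Cond p q) (Cond p r)))
  | d_CN : ICK_plus Gamma (Iff (Cond p Top) Top)
  | d_subst : forall s f, ICK_plus Gamma f -> ICK_plus Gamma (subst s f)
  | d_mp : forall f g, ICK_plus Gamma (Imp f g) -> ICK_plus Gamma f -> ICK_plus Gamma g
  | d_congl : forall f g h, ICK_plus Gamma (Iff f g) ->
      ICK_plus Gamma (Iff (Cond f h) (Cond g h))
  | d_congr : forall f g h, ICK_plus Gamma (Iff f g) ->
      ICK_plus Gamma (Iff (Cond h f) (Cond h g)).

Inductive iKRI_axioms : form -> Prop :=
  | kri_mp : iKRI_axioms (Imp (And p (Cond p q)) q)
  | kri_trans : iKRI_axioms (Imp (And (Cond p q) (Cond q r)) (Cond p r)).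

Definition iKRI : form -> Prop := ICK_plus iKRI_axioms.

Definition upset {X : Type} (le : X -> X -> Prop) (a : X -> Prop) : Prop :=
  forall x y, le x y -> a x -> a y.

(** A conditional frame.  [fR a] is R_a; it is only constrained (and only
    ever used) for upsets a. Coherence (<= o R_a) ⊆ (R_a o <=) is read in
    diagrammatic order. *)
Record cframe := {
  world : Type;
  fle : world -> world -> Prop;
  fle_refl : forall x, fle x x;
  fle_trans : forall x y z, fle x y -> fle y z -> fle x z;
  f_inhabited : inhabited world;
  fR : (world -> Prop) -> world -> world -> Prop;
  f_coh : forall a, upset fle a ->
    forall x y z, fle x y -> fR a y z -> exists w, fR a x w /\ fle w z
}.

Definition valuation (F : cframe) := nat -> world F -> Prop.

Definition valid_val (F : cframe) (V : valuation F) : Prop :=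
  forall n, upset (fle F) (V n).

Fixpoint sat (F : cframe) (V : valuation F) (x : world F) (f : form) : Prop :=
  match f with
  | Var n => V n x
  | Bot => False
  | And a b => sat F V x a /\ sat F V x b
  | Or a b => sat F V x a \/ sat F V x b
  | Imp a b => forall y, fle F x y -> sat F V y a -> sat F V y b
  | Cond a b => forall y, fR F (fun z => sat F V z a) x y -> sat F V y b
  end.

Definition valid (F : cframe) (f : form) : Prop :=
  forall V : valuation F, valid_val F V -> forall x, sat F V x f.

Definition KRI_frame (F : cframe) : Prop :=
  (forall (a : world F -> Prop) x, upset (fle F) a -> a x ->
     exists y, fR F a x y /\ fle F y x) /\
  (forall (a b : world F -> Prop) x, upset (fle F) a -> upset (fle F) b ->
     (forall y, fR F a x y -> b y) ->
     forall y, fR F a x y -> exists z, fR F b x z /\ fle F z y).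

(* Soundness: persistence and the coherence condition make every ICK theorem
   valid on every conditional frame; the first frame condition validates
   (p /\ (p []-> q)) -> q and the second one validates transitivity.

   Completeness: the canonical model has the prime iKRI-theories as worlds,
   ordered by inclusion, and relates x to y along R_a when y contains every c
   with (phi []-> c) in x, where phi is a formula whose truth set is a (Top if
   there is none).  Both frame conditions then hold with the trivial witness
   (y := x, resp. z := y), by the two extra axioms, and the truth lemma
   identifies satisfaction with membership. *)

From Stdlib Require Import Classical ClassicalEpsilon FunctionalExtensionality
  PropExtensionality Cantor Lia.

(** * Soundness *)

Lemma sat_persistent (F : cframe) (V : valuation F) : valid_val F V ->
  forall f x y, fle F x y -> sat F V x f -> sat F V y f.
Proof.
  intros HV f; induction f as [n| |a IHa b IHb|a IHa b IHb|a _ b _|a IHa b IHb];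
    intros x y Hxy; simpl.
  - apply HV, Hxy.
  - tauto.
  - intros [Ha Hb]; split; eauto.
  - intros [Ha|Hb]; [left|right]; eauto.
  - intros Hx z Hyz; apply Hx, (fle_trans F _ _ _ Hxy Hyz).
  - intros Hx z Hyz.
    destruct (f_coh F _ IHa x y z Hxy Hyz) as [w [Hxw Hwz]].
    exact (IHb w z Hwz (Hx w Hxw)).
Qed.

Lemma sat_subst F V (s : nat -> form) f x :
  sat F V x (subst s f) <-> sat F (fun n z => sat F V z (s n)) x f.
Proof.
  revert x; induction f as [n| |a IHa b IHb|a IHa b IHb|a IHa b IHb|a IHa b IHb];
    intro x; simpl.
  - tauto.
  - tauto.
  - rewrite IHa, IHb; tauto.
  - rewrite IHa, IHb; tauto.
  - split; intros Hx y Hxy Ha; apply IHb, Hx, IHa; assumption.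
  - assert (Ea : (fun z => sat F V z (subst s a))
                 = (fun z => sat F (fun n z => sat F V z (s n)) z a)).
    { apply functional_extensionality; intro z.
      apply propositional_extensionality, IHa. }
    rewrite Ea; split; intros Hx y Hxy; apply IHb, Hx, Hxy.
Qed.

Lemma valid_Iff F f g : valid F (Iff f g) <->
  (forall V, valid_val F V -> forall x, sat F V x f <-> sat F V x g).
Proof.
  split.
  - intros H V HV x; destruct (H V HV x) as [Hfg Hgf].
    split; [apply Hfg|apply Hgf]; apply fle_refl.
  - intros H V HV x; split; intros y _; apply H; auto.
Qed.

Section Validity.
Variable F : cframe.

Lemma valid_ipc_axiom f : ipc_axiom f -> valid F f.
Proof.
  intros [] V HV x; simpl.
  - intros y _ Hp z Hyz _; exact (HV 0 y z Hyz Hp).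
  - intros y _ Hpqr z Hyz Hpq w Hzw Hp.
    exact (Hpqr w (fle_trans F _ _ _ Hyz Hzw) Hp w (fle_refl F w) (Hpq w Hzw Hp)).
  - tauto.
  - tauto.
  - intros y _ Hp z Hyz Hq; exact (conj (HV 0 y z Hyz Hp) Hq).
  - tauto.
  - tauto.
  - intros y _ Hpr z Hyz Hqr w Hzw [Hp|Hq].
    + exact (Hpr w (fle_trans F _ _ _ Hyz Hzw) Hp).
    + exact (Hqr w Hzw Hq).
  - tauto.
Qed.

Lemma valid_CM : valid F (Iff (Cond p (And q r)) (And (Cond p q) (Cond p r))).
Proof. apply valid_Iff; intros V _ x; simpl; firstorder. Qed.

Lemma valid_CN : valid F (Iff (Cond p Top) Top).
Proof. apply valid_Iff; intros V _ x; simpl; tauto. Qed.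

Lemma valid_subst s f : valid F f -> valid F (subst s f).
Proof.
  intros Hf V HV x; apply sat_subst, Hf.
  intros n; exact (sat_persistent F V HV (s n)).
Qed.

Lemma valid_mp f g : valid F (Imp f g) -> valid F f -> valid F g.
Proof. intros Hfg Hf V HV x; exact (Hfg V HV x x (fle_refl F x) (Hf V HV x)). Qed.

Lemma valid_congl f g h : valid F (Iff f g) -> valid F (Iff (Cond f h) (Cond g h)).
Proof.
  rewrite !valid_Iff; intros Hfg V HV x.
  assert (E : (fun z => sat F V z f) = (fun z => sat F V z g)).
  { apply functional_extensionality; intro z.
    apply propositional_extensionality, Hfg, HV. }
  simpl; rewrite E; tauto.
Qed.

Lemma valid_congr f g h : valid F (Iff f g) -> valid F (Iff (Cond h f) (Cond h g)).
Proof.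
  rewrite !valid_Iff; intros Hfg V HV x; simpl.
  split; intros Hx y Hxy; apply (Hfg V HV), Hx, Hxy.
Qed.

Lemma valid_iKRI_axiom f : KRI_frame F -> iKRI_axioms f -> valid F f.
Proof.
  intros [HR1 HR2] [] V HV x; simpl.
  - intros y _ [Hp Hpq].
    destruct (HR1 _ y (HV 0) Hp) as [z [Hyz Hzy]].
    exact (HV 1 z y Hzy (Hpq z Hyz)).
  - intros y _ [Hpq Hqr] z Hyz.
    destruct (HR2 _ _ y (HV 0) (HV 1) Hpq z Hyz) as [w [Hyw Hwz]].
    exact (HV 2 w z Hwz (Hqr w Hyw)).
Qed.

Lemma iKRI_sound f : KRI_frame F -> iKRI f -> valid F f.
Proof.
  intros HF; induction 1.
  - now apply valid_ipc_axiom.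
  - now apply valid_iKRI_axiom.
  - apply valid_CM.
  - apply valid_CN.
  - now apply valid_subst.
  - eapply valid_mp; eauto.
  - now apply valid_congl.
  - now apply valid_congr.
Qed.

End Validity.

Definition point_frame : cframe.
Proof.
  refine {| world := unit; fle := fun _ _ => True; fR := fun _ _ _ => True |}.
  - trivial.
  - trivial.
  - exact (inhabits tt).
  - intros _ _ _ _ z _ _; exists z; tauto.
Defined.

Lemma point_frame_KRI : KRI_frame point_frame.
Proof. split; intros; exists tt; simpl; tauto. Qed.

Lemma iKRI_consistent : ~ iKRI Bot.
Proof.
  intro H.
  exact (iKRI_sound point_frame Bot point_frame_KRI H (fun _ _ => True)
           (fun _ _ _ _ _ => I) tt).
Qed.

Definition inst (a b c : form) : nat -> form :=
  fun n => match n with 0 => a | 1 => b | _ => c end.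

Lemma iKRI_ipc a b c f : ipc_axiom f -> iKRI (subst (inst a b c) f).
Proof. intro Hf; now apply d_subst, d_ipc. Qed.

Lemma iKRI_K a b : iKRI (Imp a (Imp b a)).
Proof. exact (iKRI_ipc a b a _ ipc_K). Qed.
Lemma iKRI_S a b c : iKRI (Imp (Imp a (Imp b c)) (Imp (Imp a b) (Imp a c))).
Proof. exact (iKRI_ipc a b c _ ipc_S). Qed.
Lemma iKRI_andE1 a b : iKRI (Imp (And a b) a).
Proof. exact (iKRI_ipc a b a _ ipc_andE1). Qed.
Lemma iKRI_andE2 a b : iKRI (Imp (And a b) b).
Proof. exact (iKRI_ipc a b a _ ipc_andE2). Qed.
Lemma iKRI_andI a b : iKRI (Imp a (Imp b (And a b))).
Proof. exact (iKRI_ipc a b a _ ipc_andI). Qed.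
Lemma iKRI_orI1 a b : iKRI (Imp a (Or a b)).
Proof. exact (iKRI_ipc a b a _ ipc_orI1). Qed.
Lemma iKRI_orI2 a b : iKRI (Imp b (Or a b)).
Proof. exact (iKRI_ipc a b a _ ipc_orI2). Qed.
Lemma iKRI_orE a b c : iKRI (Imp (Imp a c) (Imp (Imp b c) (Imp (Or a b) c))).
Proof. exact (iKRI_ipc a b c _ ipc_orE). Qed.
Lemma iKRI_efq a : iKRI (Imp Bot a).
Proof. exact (iKRI_ipc a a a _ ipc_efq). Qed.

Lemma iKRI_CM a b c : iKRI (Iff (Cond a (And b c)) (And (Cond a b) (Cond a c))).
Proof. exact (d_subst _ (inst a b c) _ (d_CM _)). Qed.
Lemma iKRI_CN a : iKRI (Iff (Cond a Top) Top).
Proof. exact (d_subst _ (inst a a a) _ (d_CN _)). Qed.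
Lemma iKRI_cond_mp a b : iKRI (Imp (And a (Cond a b)) b).
Proof. exact (d_subst _ (inst a b b) _ (d_gamma _ _ kri_mp)). Qed.
Lemma iKRI_cond_trans a b c : iKRI (Imp (And (Cond a b) (Cond b c)) (Cond a c)).
Proof. exact (d_subst _ (inst a b c) _ (d_gamma _ _ kri_trans)). Qed.

Lemma iKRI_I a : iKRI (Imp a a).
Proof. exact (d_mp _ _ _ (d_mp _ _ _ (iKRI_S a (Imp a a) a) (iKRI_K _ _)) (iKRI_K _ _)). Qed.

Lemma iKRI_Iff a b : iKRI (Imp a b) -> iKRI (Imp b a) -> iKRI (Iff a b).
Proof. intros Hab Hba; exact (d_mp _ _ _ (d_mp _ _ _ (iKRI_andI _ _) Hab) Hba). Qed.

Lemma iKRI_Iff_l a b : iKRI (Iff a b) -> iKRI (Imp a b).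
Proof. exact (d_mp _ _ _ (iKRI_andE1 _ _)). Qed.

Lemma iKRI_Iff_r a b : iKRI (Iff a b) -> iKRI (Imp b a).
Proof. exact (d_mp _ _ _ (iKRI_andE2 _ _)). Qed.

Inductive derivable (G : form -> Prop) : form -> Prop :=
  | der_thm f : iKRI f -> derivable G f
  | der_hyp f : G f -> derivable G f
  | der_mp f g : derivable G (Imp f g) -> derivable G f -> derivable G g.

Definition extend (G : form -> Prop) (a : form) : form -> Prop :=
  fun d => G d \/ d = a.

Lemma der_app G a b : iKRI (Imp a b) -> derivable G a -> derivable G b.
Proof. intro Hab; apply der_mp, der_thm, Hab. Qed.

Lemma der_app2 G a b c :
  iKRI (Imp a (Imp b c)) -> derivable G a -> derivable G b -> derivable G c.
Proof. intros Habc Ha; apply der_mp, (der_app _ _ _ Habc Ha). Qed.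

Lemma der_added G a : derivable (extend G a) a.
Proof. apply der_hyp; now right. Qed.

Lemma derivable_mono (G G' : form -> Prop) f :
  (forall a, G a -> G' a) -> derivable G f -> derivable G' f.
Proof.
  intros HG; induction 1.
  - now apply der_thm.
  - now apply der_hyp, HG.
  - eapply der_mp; eauto.
Qed.

Lemma derivable_deduction G a b : derivable (extend G a) b -> derivable G (Imp a b).
Proof.
  induction 1 as [f Hf|f Hf|f g _ IHfg _ IHf].
  - exact (der_app _ _ _ (iKRI_K f a) (der_thm _ _ Hf)).
  - destruct Hf as [Hf| ->].
    + exact (der_app _ _ _ (iKRI_K f a) (der_hyp _ _ Hf)).
    + exact (der_thm _ _ (iKRI_I a)).
  - exact (der_app2 _ _ _ _ (iKRI_S a f g) IHfg IHf).
Qed.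

Lemma derivable_iKRI f : derivable (fun _ => False) f -> iKRI f.
Proof.
  induction 1 as [f Hf|f []|f g _ IHfg _ IHf]; [exact Hf|].
  exact (d_mp _ _ _ IHfg IHf).
Qed.

Lemma iKRI_imp_intro a b : derivable (extend (fun _ => False) a) b -> iKRI (Imp a b).
Proof. intro Hd; apply derivable_iKRI, derivable_deduction, Hd. Qed.

Lemma derivable_chain (Gs : nat -> form -> Prop) f :
  (forall m n c, m <= n -> Gs m c -> Gs n c) ->
  derivable (fun c => exists n, Gs n c) f -> exists n, derivable (Gs n) f.
Proof.
  intros Hmono; induction 1 as [f Hf|f [n Hf]|f g _ [m Hm] _ [n Hn]].
  - exists 0; now apply der_thm.
  - exists n; now apply der_hyp.
  - exists (Nat.max m n); apply der_mp with f; eapply derivable_mono;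
      try eassumption; intros c; apply Hmono; lia.
Qed.

Lemma iKRI_modus_ponens_and a b : iKRI (Imp (And (Imp a b) a) b).
Proof.
  apply iKRI_imp_intro.
  exact (der_mp _ _ _ (der_app _ _ _ (iKRI_andE1 _ _) (der_added _ _))
                      (der_app _ _ _ (iKRI_andE2 _ _) (der_added _ _))).
Qed.

(* Via a <-> a /\ b, right congruence and CM. *)
Lemma iKRI_cond_mono a b c : iKRI (Imp a b) -> iKRI (Imp (Cond c a) (Cond c b)).
Proof.
  intro Hab.
  assert (Ha_ab : iKRI (Iff a (And a b))).
  { apply iKRI_Iff; [|apply iKRI_andE1].
    apply iKRI_imp_intro.
    exact (der_app2 _ _ _ _ (iKRI_andI _ _) (der_added _ _)
             (der_app _ _ _ Hab (der_added _ _))). }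
  apply iKRI_imp_intro.
  apply (der_app _ _ _ (iKRI_andE2 (Cond c a) _)),
        (der_app _ _ _ (iKRI_Iff_l _ _ (iKRI_CM _ _ _))),
        (der_app _ _ _ (iKRI_Iff_l _ _ (d_congr _ _ _ c Ha_ab))), der_added.
Qed.

Lemma iKRI_cond_nec a c : iKRI a -> iKRI (Cond c a).
Proof.
  intro Ha.
  apply (d_mp _ _ _ (iKRI_cond_mono Top a c (d_mp _ _ _ (iKRI_K a Top) Ha))).
  exact (d_mp _ _ _ (iKRI_Iff_r _ _ (iKRI_CN c)) (iKRI_I Bot)).
Qed.

Lemma iKRI_cond_and a b c : iKRI (Imp (And (Cond c a) (Cond c b)) (Cond c (And a b))).
Proof. apply iKRI_Iff_r, iKRI_CM. Qed.

(** * Prime theories *)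

Record ptheory := {
  pt_mem :> form -> Prop;
  pt_closed : forall f, derivable pt_mem f -> pt_mem f;
  pt_consistent : ~ pt_mem Bot;
  pt_prime : forall a b, pt_mem (Or a b) -> pt_mem a \/ pt_mem b }.

Fixpoint form_code (f : form) : nat :=
  match f with
  | Var n => to_nat (0, n)
  | Bot => to_nat (1, 0)
  | And a b => to_nat (2, to_nat (form_code a, form_code b))
  | Or a b => to_nat (3, to_nat (form_code a, form_code b))
  | Imp a b => to_nat (4, to_nat (form_code a, form_code b))
  | Cond a b => to_nat (5, to_nat (form_code a, form_code b))
  end.

Lemma to_nat_inj m n m' n' : to_nat (m, n) = to_nat (m', n') -> m = m' /\ n = n'.
Proof.
  intro E; apply (f_equal of_nat) in E; rewrite !cancel_of_to in E.
  now injection E.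
Qed.

Lemma form_code_inj f g : form_code f = form_code g -> f = g.
Proof.
  revert g; induction f; intros [] E; cbn [form_code] in E;
    apply to_nat_inj in E as [Etag E]; try discriminate Etag; try now subst.
  all: apply to_nat_inj in E as [E1 E2]; f_equal; auto.
Qed.

Section Lindenbaum.
Variables (G : form -> Prop) (psi : form).
Hypothesis G_psi : ~ derivable G psi.

Fixpoint stage (n : nat) : form -> Prop :=
  match n with
  | 0 => G
  | S m => fun c => stage m c \/
                    (form_code c = m /\ ~ derivable (extend (stage m) c) psi)
  end.

Definition limit (c : form) : Prop := exists n, stage n c.

Lemma stage_mono m n c : m <= n -> stage m c -> stage n c.
Proof. induction 1; simpl; auto. Qed.

Lemma stage_underivable n : ~ derivable (stage n) psi.
Proof.
  induction n as [|m IH]; [exact G_psi|].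
  destruct (classic (exists c, form_code c = m /\
                        ~ derivable (extend (stage m) c) psi)) as [[c [Hc Hcpsi]]|Hnone].
  - intro D; apply Hcpsi; revert D; apply derivable_mono.
    intros a [Ha|[Ha _]]; [now left|right].
    apply form_code_inj; congruence.
  - intro D; apply IH; revert D; apply derivable_mono.
    intros a [Ha|Ha]; [exact Ha|exfalso; eauto].
Qed.

Lemma limit_underivable : ~ derivable limit psi.
Proof.
  intro D; destruct (derivable_chain stage psi stage_mono D) as [n Dn].
  exact (stage_underivable n Dn).
Qed.

Lemma limit_extend c : ~ limit c -> derivable (extend limit c) psi.
Proof.
  intro Hc.
  destruct (classic (derivable (extend (stage (form_code c)) c) psi)) as [D|D].
  - revert D; apply derivable_mono; intros a [Ha|Ha]; [left; eexists|right]; eauto.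
  - exfalso; apply Hc; exists (S (form_code c)); simpl; auto.
Qed.

Lemma limit_closed f : derivable limit f -> limit f.
Proof.
  intro Df; apply NNPP; intro Hf; apply limit_underivable.
  exact (der_mp _ _ _ (derivable_deduction _ _ _ (limit_extend f Hf)) Df).
Qed.

Lemma limit_consistent : ~ limit Bot.
Proof.
  intro Hbot; apply limit_underivable.
  exact (der_app _ _ _ (iKRI_efq psi) (der_hyp _ _ Hbot)).
Qed.

Lemma limit_prime a b : limit (Or a b) -> limit a \/ limit b.
Proof.
  intro Hab; apply NNPP; intros [Ha Hb]%not_or_and; apply limit_underivable.
  apply (der_mp _ (Or a b)); [|now apply der_hyp].
  apply (der_app2 _ _ _ _ (iKRI_orE a b psi)); now apply derivable_deduction, limit_extend.
Qed.

Definition limit_theory : ptheory :=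
  {| pt_mem := limit; pt_closed := limit_closed;
     pt_consistent := limit_consistent; pt_prime := limit_prime |}.

End Lindenbaum.

Lemma lindenbaum G psi :
  ~ derivable G psi -> exists x : ptheory, (forall a, G a -> x a) /\ ~ x psi.
Proof.
  intro G_psi; exists (limit_theory G psi G_psi); split.
  - intros a Ha; exists 0; exact Ha.
  - intro Hpsi; exact (limit_underivable G psi G_psi (der_hyp _ _ Hpsi)).
Qed.

Section PrimeTheory.
Variable x : ptheory.

Lemma pt_thm f : iKRI f -> x f.
Proof. intro Hf; apply pt_closed, der_thm, Hf. Qed.

Lemma pt_app a b : iKRI (Imp a b) -> x a -> x b.
Proof. intros Hab Ha; apply pt_closed, (der_app _ _ _ Hab), der_hyp, Ha. Qed.

Lemma pt_and a b : x (And a b) <-> x a /\ x b.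
Proof.
  split.
  - intro Hab; split; [apply (pt_app _ _ (iKRI_andE1 a b))|apply (pt_app _ _ (iKRI_andE2 a b))];
      exact Hab.
  - intros [Ha Hb]; apply pt_closed, (der_app2 _ _ _ _ (iKRI_andI a b)); now apply der_hyp.
Qed.

Lemma pt_or a b : x (Or a b) <-> x a \/ x b.
Proof.
  split; [apply pt_prime|].
  intros [Ha|Hb]; [exact (pt_app _ _ (iKRI_orI1 a b) Ha)|exact (pt_app _ _ (iKRI_orI2 a b) Hb)].
Qed.

Lemma pt_imp a b :
  x (Imp a b) <-> forall y : ptheory, (forall f, x f -> y f) -> y a -> y b.
Proof.
  split.
  - intros Hab y Hxy Ha; apply pt_closed.
    exact (der_mp _ _ _ (der_hyp _ _ (Hxy _ Hab)) (der_hyp _ _ Ha)).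
  - intro Hsem; apply NNPP; intro Hab.
    destruct (lindenbaum (extend x a) b) as [y [Hxy Hb]].
    + intro D; apply Hab, pt_closed, derivable_deduction, D.
    + apply Hb, Hsem; intros; apply Hxy; [left|right]; auto.
Qed.

Lemma pt_cond_derivable phi (G : form -> Prop) psi :
  (forall a, G a -> x (Cond phi a)) -> derivable G psi -> x (Cond phi psi).
Proof.
  intro HG; induction 1 as [f Hf|f Hf|f g _ IHfg _ IHf].
  - apply pt_thm, iKRI_cond_nec, Hf.
  - apply HG, Hf.
  - apply (pt_app _ _ (iKRI_cond_mono _ _ phi (iKRI_modus_ponens_and f g))).
    apply (pt_app _ _ (iKRI_cond_and _ _ _)), pt_and; auto.
Qed.

Lemma pt_cond phi psi :
  x (Cond phi psi) <-> forall y : ptheory, (forall c, x (Cond phi c) -> y c) -> y psi.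
Proof.
  split; [intros Hpsi y Hy; exact (Hy _ Hpsi)|].
  intro Hsem; apply NNPP; intro Hpsi.
  destruct (lindenbaum (fun c => x (Cond phi c)) psi) as [y [Hxy Hy]].
  - intro D; exact (Hpsi (pt_cond_derivable phi _ psi (fun a Ha => Ha) D)).
  - exact (Hy (Hsem y Hxy)).
Qed.

End PrimeTheory.

Lemma iKRI_of_ptheories a b : (forall x : ptheory, x a -> x b) -> iKRI (Imp a b).
Proof.
  intro Hsem; apply NNPP; intro Hab.
  destruct (lindenbaum (extend (fun _ => False) a) b) as [x [Ha Hb]].
  - intro D; exact (Hab (iKRI_imp_intro _ _ D)).
  - apply Hb, Hsem, Ha; now right.
Qed.

Lemma pt_cond_antecedent (x : ptheory) a b c :
  (forall y : ptheory, y a <-> y b) -> x (Cond a c) -> x (Cond b c).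
Proof.
  intro Hab; apply pt_app, iKRI_Iff_l, d_congl.
  apply iKRI_Iff; apply iKRI_of_ptheories; apply Hab.
Qed.

(** * The canonical model *)

Definition defines (P : ptheory -> Prop) (phi : form) : Prop :=
  forall x : ptheory, P x <-> x phi.

(* The fallback Top keeps [cformula_sound] true for undefinable P, which the
   frame conditions need. *)
Definition cformula (P : ptheory -> Prop) : form :=
  match excluded_middle_informative (exists phi, defines P phi) with
  | left h => proj1_sig (constructive_indefinite_description _ h)
  | right _ => Top
  end.

Lemma cformula_defines P phi : defines P phi -> defines P (cformula P).
Proof.
  intro Hphi; unfold cformula.
  destruct excluded_middle_informative as [h|h]; [|exfalso; eauto].
  exact (proj2_sig (constructive_indefinite_description _ h)).
Qed.

Lemma cformula_sound P (x : ptheory) : P x -> x (cformula P).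
Proof.
  unfold cformula; destruct excluded_middle_informative as [h|h].
  - apply (proj2_sig (constructive_indefinite_description _ h)).
  - intros _; apply pt_thm, iKRI_I.
Qed.

Lemma pt_cond_cformula P phi (x : ptheory) c :
  defines P phi -> x (Cond (cformula P) c) <-> x (Cond phi c).
Proof.
  intro Hphi; pose proof (cformula_defines P phi Hphi) as Hc.
  split; apply pt_cond_antecedent; intro y; rewrite <- (Hphi y), <- (Hc y); reflexivity.
Qed.

Definition can_le (x y : ptheory) : Prop := forall f, x f -> y f.

Definition can_R (P : ptheory -> Prop) (x y : ptheory) : Prop :=
  forall c, x (Cond (cformula P) c) -> y c.

Lemma can_coh P : upset can_le P ->
  forall x y z, can_le x y -> can_R P y z -> exists w, can_R P x w /\ can_le w z.
Proof. intros _ x y z Hxy Hyz; exists z; split; [|now intros f]; intros c Hc; auto. Qed.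

Lemma ptheory_inhabited : inhabited ptheory.
Proof.
  destruct (lindenbaum (fun _ => False) Bot) as [x _].
  - intro D; exact (iKRI_consistent (derivable_iKRI _ D)).
  - exact (inhabits x).
Qed.

Definition canonical_frame : cframe :=
  {| world := ptheory; fle := can_le;
     fle_refl := fun x f Hf => Hf;
     fle_trans := fun x y z Hxy Hyz f Hf => Hyz f (Hxy f Hf);
     f_inhabited := ptheory_inhabited; fR := can_R; f_coh := can_coh |}.

Lemma canonical_KRI : KRI_frame canonical_frame.
Proof.
  split; simpl.
  - intros P x _ HPx; exists x; split; [|now intros f].
    intros c Hc; apply (pt_app _ _ _ (iKRI_cond_mp (cformula P) c)), pt_and.
    split; [apply cformula_sound|]; assumption.
  - intros P Q x _ _ HPQ y Hxy; exists y; split; [|now intros f].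
    assert (HPQx : x (Cond (cformula P) (cformula Q))).
    { apply pt_cond; intros z Hz; apply cformula_sound, HPQ; exact Hz. }
    intros c Hc; apply Hxy, (pt_app _ _ _ (iKRI_cond_trans _ (cformula Q) _)), pt_and.
    split; assumption.
Qed.

Definition canonical_val : valuation canonical_frame := fun n (x : ptheory) => x (Var n).

Lemma canonical_val_valid : valid_val canonical_frame canonical_val.
Proof. intros n x y Hxy; apply Hxy. Qed.

Lemma canonical_truth f (x : ptheory) : sat canonical_frame canonical_val x f <-> x f.
Proof.
  revert x; induction f as [n| |a IHa b IHb|a IHa b IHb|a IHa b IHb|a IHa b IHb];
    intro x; simpl.
  - reflexivity.
  - split; [contradiction|apply pt_consistent].
  - rewrite IHa, IHb, pt_and; reflexivity.
  - rewrite IHa, IHb, pt_or; reflexivity.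
  - rewrite pt_imp; split; intros Hx y Hxy Ha; apply IHb, Hx, IHa; assumption.
  - rewrite pt_cond; unfold can_R.
    setoid_rewrite (pt_cond_cformula _ a x _ IHa).
    split; intros Hx y Hy; apply IHb, Hx, Hy.
Qed.

Lemma iKRI_complete f : valid canonical_frame f -> iKRI f.
Proof.
  intro Hf; apply NNPP; intro Hnf.
  destruct (lindenbaum (fun _ => False) f) as [x [_ Hx]].
  - intro D; exact (Hnf (derivable_iKRI _ D)).
  - exact (Hx (proj1 (canonical_truth f x) (Hf _ canonical_val_valid x))).
Qed.

Theorem theorem5p12 :
  forall f : form, iKRI f <-> (forall F : cframe, KRI_frame F -> valid F f).
Proof.
  intro f; split.
  - intros Hf F HF; exact (iKRI_sound F f HF Hf).
  - intro Hf; exact (iKRI_complete f (Hf canonical_frame canonical_KRI)).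
Qed.
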